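(* For every integer $N>0$, \[\mathcal{F}_{(1)}(w_1,\dots,w_N)=\alpha^{N-1}\sum_{k=1}^N\frac{(1-q)^2w_k}{(1-w_k)(1-qw_k)}.\]
   Context: $q>0$, $q\ne1$, $\alpha\ge0$. $\mathcal{B}_N$ is the group of signed permutations of $\{1,\dots,N\}$ acting by $\sigma(f(w_1,\dots,w_N))=f(w_{\sigma(1)},\dots,w_{\sigma(N)})$ with $w_{-k}:=1/(qw_k)$. With $V_k=\frac{q^{\binom{k}{2}}(1-q)^k}{\prod_{i=1}^k(1-q^i)(1+q^{i-1})}$ and $\varphi_1(w)=\frac{1-q-\alpha+\alpha w}{1-qw^2}\frac{(1-q)w}{1-w}$, the function indexed by the one-particle configuration $(1)$ is \[\mathcal{F}_{(1)}(w_1,\dots,w_N)=V_{N-1}\alpha^{N-1}\sum_{\sigma\in\mathcal{B}_N}\sigma\!\left(\prod_{1\le i<j\le N}\left[\frac{w_i-qw_j}{w_i-w_j}\frac{1-w_iw_j}{1-qw_iw_j}\right]\varphi_1(w_1)\right).\] *)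

From HB Require Import structures.
From mathcomp Require Import all_boot all_order all_algebra all_fingroup.
Set Implicit Arguments. Unset Strict Implicit. Unset Printing Implicit Defensive.
Import Order.TTheory GRing.Theory Num.Theory.
Local Open Scope ring_scope.

(* A signed permutation sigma of {1..N} is encoded by a pair (s, e) with
   s : 'S_N and e : {ffun 'I_N -> bool}:  sigma(i) = - s(i) if e i, else s(i).
   This is a bijection between 'S_N * {ffun 'I_N -> bool} and B_N.
   The action sigma(f)(w) = f(w_{sigma(1)},...,w_{sigma(N)}) with
   w_{-k} = 1/(q w_k) evaluates f at the point [sperm_apply q s e w]. *)
Definition sperm_apply (R : fieldType) (N : nat) (q : R) (s : 'S_N)
  (e : {ffun 'I_N -> bool}) (w : 'I_N -> R) : 'I_N -> R :=
  fun i => if e i then (q * w (s i))^-1 else w (s i).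

Definition pair_factor (R : fieldType) (q a b : R) : R :=
  (a - q * b) / (a - b) * ((1 - a * b) / (1 - q * a * b)).

Definition phi1 (R : fieldType) (q alpha x : R) : R :=
  (1 - q - alpha + alpha * x) / (1 - q * x ^+ 2) * ((1 - q) * x / (1 - x)).

Definition Vk (R : fieldType) (q : R) (k : nat) : R :=
  q ^+ 'C(k, 2) * (1 - q) ^+ k /
  \prod_(1 <= i < k.+1) ((1 - q ^+ i) * (1 + q ^+ (i - 1))).

(* the function inside sigma(...), evaluated at x; i0 is the first index *)
Definition F1_summand (R : fieldType) (N : nat) (q alpha : R) (i0 : 'I_N)
  (x : 'I_N -> R) : R :=
  (\prod_(i < N) \prod_(j < N | (i < j)%N) pair_factor q (x i) (x j))
  * phi1 q alpha (x i0).

Definition F1 (R : fieldType) (N : nat) (q alpha : R) (i0 : 'I_N)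
  (w : 'I_N -> R) : R :=
  Vk q (N - 1) * alpha ^+ (N - 1) *
  \sum_(s : 'S_N) \sum_(e : {ffun 'I_N -> bool})
     F1_summand q alpha i0 (sperm_apply q s e w).

(* Genericity of the point w: every denominator occurring in either side
   (for every signed permutation) is nonzero. *)
Definition generic_point (R : fieldType) (N : nat) (q : R) (w : 'I_N -> R) : Prop :=
  (forall k, w k != 0 /\ 1 - w k != 0 /\ 1 - q * w k != 0) /\
  (forall (s : 'S_N) (e : {ffun 'I_N -> bool}),
     let x := sperm_apply q s e w in
     (forall i j, i != j -> x i - x j != 0 /\ 1 - q * x i * x j != 0) /\
     (forall i, 1 - x i != 0 /\ 1 - q * x i ^+ 2 != 0)).

(* Write E_a(t) = (t - q a)(1 - a t) and D_a(t) = (t - a)(1 - q a t), so that the pair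
   factor is E_{w_j}(t) / D_{w_j}(t); the roots of D_{w_k} are w_k and w_{-k} = 1/(q w_k).
   Splitting the sum over B_N according to sigma(1) = +-k, and using that the pair factor
   is unchanged by w_j -> 1/(q w_j), the symmetrization of the pair product times
   phi(x_1) becomes sum_{k,+-} phi(y) prod_{j <> k} pair(y, w_j) times the same
   symmetrization Z_{N-1} in the other N - 1 variables, evaluated at y = w_{+-k}.
   Since E_a = D_a mod t^2 - 1, Q = (prod_j E_{w_j} - prod_j D_{w_j}) / (t^2 - 1) is a
   polynomial of degree at most 2N - 2 with Q(y) = (q - 1) w_k prod_{j <> k} E_{w_j}(y) at
   the roots y of D_{w_k}; hence each single sum is a Lagrange interpolation sum over the
   2N roots and one extra node, equal to a top coefficient. For phi = 1 (extra node 0)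
   this gives Z_N = Z_{N-1} (1 - q^N)(q + q^N) / ((1 - q) q^N), i.e. Z_N = 1 / V_N; for
   phi = phi_1 (extra node 1) the interpolated polynomial has degree 2N - 1 and only its
   value at 1 survives, which yields the right-hand side, alpha dropping out. *)

From HB Require Import structures.
From mathcomp Require Import all_boot all_order all_algebra all_fingroup.
From mathcomp Require Import ring zify.
Import Order.TTheory GRing.Theory Num.Theory.
Local Open Scope ring_scope.

Set Implicit Arguments. Unset Strict Implicit. Unset Printing Implicit Defensive.

Lemma lagrange_top_coef (F : fieldType) (I : finType) (x : I -> F) (p : {poly F}) :
  injective x -> (size p <= #|I|)%N ->
  \sum_i p.[x i] / \prod_(j | j != i) (x i - x j) = p`_(#|I|.-1).
Proof.
move=> x_inj size_p.
pose l i := \prod_(j | j != i) ('X - (x j)%:P).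
have size_l i : size (l i) = #|I|.
  rewrite /l -big_filter size_prod_XsubC size_filter -sum1_count sum1_card.
  by rewrite cardC1; case: #|I| (max_card (pred1 i)) => //; rewrite card1.
have l_x i j : (l i).[x j] = (j == i)%:R * \prod_(k | k != i) (x i - x k).
  rewrite /l horner_prod; have [->|ji] := eqVneq j i.
    by rewrite mul1r; apply: eq_bigr => k _; rewrite hornerXsubC.
  by rewrite mul0r (bigD1 j) //= hornerXsubC subrr mul0r.
have l_nz i : \prod_(j | j != i) (x i - x j) != 0.
  by apply/prodf_neq0 => j ji; rewrite subr_eq0 (inj_eq x_inj) eq_sym.
pose L := \sum_i (p.[x i] / \prod_(j | j != i) (x i - x j)) *: l i.
have L_p : L = p.
  apply/eqP; rewrite -subr_eq0; apply/eqP.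
  apply: (@roots_geq_poly_eq0 _ _ [seq x i | i <- enum I]).
  - apply/allP => _ /mapP [i _ ->]; rewrite /root hornerD hornerN horner_sum.
    rewrite (bigD1 i) //= [\sum_(j | j != i) _]big1 => [|j ji]; last first.
      by rewrite hornerZ l_x eq_sym (negbTE ji) mul0r mulr0.
    by rewrite hornerZ l_x eqxx mul1r divfK // addr0 subrr.
  - by rewrite map_inj_uniq ?enum_uniq.
  rewrite size_map -cardE; apply: leq_trans (size_polyD _ _) _.
  rewrite size_polyN geq_max size_p andbT; apply: leq_trans (size_sum _ _ _) _.
  by apply/bigmax_leqP => i _; rewrite (leq_trans (size_scale_leq _ _)) ?size_l.
rewrite -[in RHS]L_p coef_sum; apply: eq_bigr => i _.
by rewrite coefZ -(size_l i) -lead_coefE (monicP (monic_prod_XsubC _ _ _)) mulr1.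
Qed.

Section BigOps.

Variables (R : Type) (idx : R) (op : Monoid.com_law idx).

Lemma big_option (T : finType) (P : pred (option T)) (F : option T -> R) :
  \big[op/idx]_(o | P o) F o =
  op (if P None then F None else idx) (\big[op/idx]_(x | P (Some x)) F (Some x)).
Proof.
rewrite big_mkcond (bigD1 None) //=; congr (op _ _).
rewrite (reindex_omap Some id) => [|[x|] //] /=.
by rewrite [RHS]big_mkcond; apply: eq_bigl => x; rewrite eqxx.
Qed.

Lemma reindex_inj_card (I J : finType) (f : J -> I) (F : I -> R) :
  injective f -> (#|I| <= #|J|)%N ->
  \big[op/idx]_i F i = \big[op/idx]_j F (f j).
Proof. by move=> f_inj le_IJ; apply: reindex; apply/onW_bij/inj_card_bij. Qed.

Lemma big_perm_lift0 n (F : 'S_n.+1 -> R) :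
  \big[op/idx]_s F s = \big[op/idx]_k \big[op/idx]_(s : 'S_n) F (lift_perm ord0 k s).
Proof.
rewrite pair_big (reindex_inj_card _ (f := fun p => lift_perm ord0 p.1 p.2)) //=.
  move=> [k s] [k' s'] /= eq_ks; have eq_k := congr1 (fun t : 'S_n.+1 => t ord0) eq_ks.
  rewrite /= !lift_perm_id in eq_k; rewrite -eq_k in eq_ks *; congr (_, _).
  apply/permP => j; apply: (@lift_inj _ k).
  by rewrite -!(lift_perm_lift ord0) eq_ks.
by rewrite card_prod card_ord !card_Sn factS.
Qed.

Definition ffun_cons0 n (T : finType) (b : T) (e : {ffun 'I_n -> T}) : {ffun 'I_n.+1 -> T} :=
  [ffun i => if unlift ord0 i is Some j then e j else b].

Lemma big_ffun_cons0 n (T : finType) (F : {ffun 'I_n.+1 -> T} -> R) :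
  \big[op/idx]_e F e = \big[op/idx]_b \big[op/idx]_(e : {ffun 'I_n -> T}) F (ffun_cons0 b e).
Proof.
rewrite pair_big (reindex_inj_card _ (f := fun p => ffun_cons0 p.1 p.2)) //=.
  move=> [b e] [b' e'] /= /ffunP eq_be; congr (_, _).
    by have := eq_be ord0; rewrite !ffunE unlift_none.
  by apply/ffunP => j; have := eq_be (lift ord0 j); rewrite !ffunE liftK.
by rewrite card_prod !card_ffun !card_ord expnS.
Qed.

End BigOps.

Lemma prod_lift (R : comNzRingType) n (F : 'I_n.+1 -> R) k :
  \prod_(j | j != k) F j = \prod_(j < n) F (lift k j).
Proof.
rewrite (reindex_omap (lift k) (unlift k)) => [|j]; last first.
  by rewrite eq_sym => /unlift_some [i -> ->].
by apply: eq_bigl => j; rewrite eq_sym neq_lift liftK eqxx.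
Qed.

Lemma prod_pair_neq (R : comNzRingType) (I : finType) (F : I -> bool -> R) k b :
  \prod_(p : I * bool | p != (k, b)) F p.1 p.2 =
  F k (~~ b) * \prod_(j | j != k) (F j true * F j false).
Proof.
rewrite (bigD1 (k, ~~ b)) /=; last by rewrite xpair_eqE eqxx; case: b.
congr (_ * _); rewrite (eq_bigr (fun j => \prod_b' F j b')) => [|j _]; last by rewrite big_bool.
rewrite pair_big; apply: eq_bigl => -[j b'] /=.
by rewrite !xpair_eqE andbT; case: (j == k); case: b; case: b'.
Qed.

Lemma coefM_top (R : nzRingType) (p r : {poly R}) m n :
  (size p <= m.+1)%N -> (size r <= n.+1)%N -> (p * r)`_(m + n) = p`_m * r`_n.
Proof.
move=> size_p size_r; rewrite coefM (bigD1 (@Ordinal (m + n).+1 m (leq_addr n m))) //= addKn.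
rewrite big1 ?addr0 // => -[j /= lt_j_mn]; rewrite -val_eqE /= => ne_jm.
have [lt_jm | lt_mj | eq_jm] := ltngtP j m; last by rewrite eq_jm eqxx in ne_jm.
  rewrite [r`__]nth_default ?mulr0 //; apply: leq_trans size_r _.
  by rewrite ltn_subRL ltn_add2r.
by rewrite nth_default ?mul0r //; apply: leq_trans size_p _.
Qed.

Lemma coef_prod_top (R : comNzRingType) (I : Type) (s : seq I) (p : I -> {poly R}) n :
  (forall i, size (p i) <= n.+1)%N ->
  (size (\prod_(i <- s) p i)%R <= (n * size s).+1)%N /\
  (\prod_(i <- s) p i)`_(n * size s) = \prod_(i <- s) (p i)`_n.
Proof.
move=> size_p; elim: s => [|i s [IHsize IHcoef]] /=.
  by rewrite !big_nil muln0 size_poly1 coef1.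
rewrite !big_cons mulnS; split; last by rewrite coefM_top // IHcoef.
apply: leq_trans (size_polyMleq _ _) _.
by rewrite -subn1 leq_subLR add1n -addnS -addSn leq_add.
Qed.

Section PairPolynomials.

Variables (F : fieldType) (q : F).

Definition pair_num (a : F) : {poly F} := ('X - (q * a)%:P) * (1 - a%:P * 'X).
Definition pair_den (a : F) : {poly F} := ('X - a%:P) * (1 - (q * a)%:P * 'X).

Lemma horner_pair_num a t : (pair_num a).[t] = (t - q * a) * (1 - a * t).
Proof. by rewrite /pair_num !hornerE. Qed.

Lemma horner_pair_den a t : (pair_den a).[t] = (t - a) * (1 - q * a * t).
Proof. by rewrite /pair_den !hornerE. Qed.

Lemma pair_factorE t a : pair_factor q t a = (pair_num a).[t] / (pair_den a).[t].
Proof.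
rewrite /pair_factor horner_pair_num horner_pair_den mulf_div.
by congr (_ * _ / (_ * _)); ring.
Qed.

Lemma pair_num_den a : pair_num a - pair_den a = ((q - 1) * a)%:P * ('X^2 - 1).
Proof. rewrite /pair_num /pair_den !polyCM polyCB; ring. Qed.

Lemma XsubC_mul_linear_top (u v : F) :
  (size (('X - u%:P) * (1 - v%:P * 'X))%R <= 3)%N /\
  (('X - u%:P) * (1 - v%:P * 'X))`_2 = - v.
Proof.
have size_lin : (size (1 - v%:P * 'X)%R <= 2)%N.
  apply: leq_trans (size_polyD _ _) _; rewrite size_polyN geq_max size_poly1.
  apply: leq_trans (size_polyMleq _ _) _; rewrite size_polyX addn2 /=; exact: size_polyC_leq1.
split; first by rewrite (leq_trans (size_polyMleq _ _)) // size_XsubC.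
by rewrite (@coefM_top _ _ _ 1 1) ?size_XsubC // !coefE /= subr0 sub0r mulr1 mul1r.
Qed.

Variables (I : finType) (w : I -> F).

Definition num_prod (A : {set I}) := \prod_(j in A) pair_num (w j).
Definition den_prod (A : {set I}) := \prod_(j in A) pair_den (w j).
Definition pair_quot (A : {set I}) := (num_prod A - den_prod A) %/ ('X^2 - 1).

Lemma Xsqr_sub1_neq0 : ('X^2 - 1 : {poly F}) != 0.
Proof. by rewrite -polyC1 monic_neq0 // monicXnsubC. Qed.

Lemma dvdp_num_den A : ('X^2 - 1) %| num_prod A - den_prod A.
Proof.
apply: (big_ind2 (fun e d => ('X^2 - 1) %| e - d)) => [|e1 d1 e2 d2 h1 h2|j _].
- by rewrite subrr dvdp0.
- have -> : e1 * e2 - d1 * d2 = (e1 - d1) * e2 + d1 * (e2 - d2) by ring.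
  by apply: dvdp_add; [apply: dvdp_mulr | apply: dvdp_mull].
- by rewrite pair_num_den dvdp_mull.
Qed.

Lemma pair_quotK A : pair_quot A * ('X^2 - 1) = num_prod A - den_prod A.
Proof. exact: divpK (dvdp_num_den A). Qed.

Lemma pair_quotD1 (A : {set I}) k : k \in A ->
  pair_quot A = ((q - 1) * w k)%:P * num_prod (A :\ k) + pair_den (w k) * pair_quot (A :\ k).
Proof.
move=> kA; apply: (mulIf Xsqr_sub1_neq0).
rewrite mulrDl -mulrA -(mulrA (pair_den _)) !pair_quotK /num_prod /den_prod !(big_setD1 _ kA) /=.
have -> : pair_num (w k) = pair_den (w k) + ((q - 1) * w k)%:P * ('X^2 - 1).
  by rewrite -pair_num_den addrC subrK.
ring.
Qed.

Lemma horner_pair_quot_root (A : {set I}) k t : k \in A -> root (pair_den (w k)) t ->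
  (pair_quot A).[t] = (q - 1) * w k * (num_prod (A :\ k)).[t].
Proof.
move=> kA /eqP den_t.
by rewrite (pair_quotD1 kA) hornerD [in X in _ + X]hornerM den_t mul0r addr0 hornerM hornerC.
Qed.

Lemma horner_pair_quot1 A :
  (pair_quot A).[1] = (q - 1) * \sum_(j in A) w j * \prod_(i in A :\ j) (pair_den (w i)).[1].
Proof.
elim: #|A| {-2}A (erefl #|A|) => [|n IH] {}A cardA.
  move/eqP: cardA; rewrite cards_eq0 => /eqP ->.
  by rewrite big_set0 mulr0 /pair_quot /num_prod /den_prod !big_set0 subrr div0p horner0.
have [k kA] : exists k, k \in A by apply/set0Pn; rewrite -cards_eq0 cardA.
have cardAk : #|A :\ k| = n by move: cardA; rewrite (cardsD1 k A) kA add1n => -[].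
have num_den1 B : (num_prod B).[1] = \prod_(i in B) (pair_den (w i)).[1].
  by rewrite horner_prod; apply: eq_bigr => i _; rewrite horner_pair_num horner_pair_den; ring.
rewrite (pair_quotD1 kA) hornerD hornerM hornerC [in X in _ + X]hornerM IH // num_den1.
rewrite (big_setD1 _ kA) /= mulrDr -mulrA; congr (_ + _).
rewrite mulrCA mulr_sumr; congr (_ * _); apply: eq_bigr => j jAk.
have kAj : k \in A :\ j by rewrite !in_setD1 kA andbT eq_sym; case/setD1P: jAk.
rewrite (big_setD1 _ kAj) mulrCA; congr (_ * (_ * _)); apply: eq_bigl => i.
by rewrite !in_setD1 andbCA.
Qed.

Lemma horner_pair_quotT1 : (forall k, (pair_den (w k)).[1] != 0) ->
  (pair_quot setT).[1] =
  (q - 1) * \prod_k (pair_den (w k)).[1] * \sum_k w k / (pair_den (w k)).[1].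
Proof.
move=> d_neq0; rewrite horner_pair_quot1 -[RHS]mulrA; congr (_ * _); rewrite mulr_sumr.
apply: eq_big => [k | k _]; first by rewrite in_setT.
have -> : \prod_(i in setT :\ k) (pair_den (w i)).[1] = \prod_(i | i != k) (pair_den (w i)).[1].
  by apply: eq_bigl => i; rewrite !inE andbT.
by rewrite [in RHS](bigD1 k) //=; move: (d_neq0 k) => ?; field.
Qed.

Lemma horner_pair_quot0 A :
  (pair_quot A).[0] = \prod_(j in A) (- w j) - \prod_(j in A) (- (q * w j)).
Proof.
have := congr1 (horner^~ 0) (pair_quotK A).
rewrite /= hornerM hornerD hornerN hornerXn hornerC expr0n /= sub0r mulrN1 hornerD hornerN.
move/eqP; rewrite eqr_oppLR opprB /num_prod /den_prod !horner_prod => /eqP ->.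
congr (_ - _); apply: eq_bigr => j _;
  by rewrite ?horner_pair_num ?horner_pair_den mulr0 subr0 mulr1 sub0r.
Qed.

Lemma num_den_top A :
  (size (num_prod A - den_prod A)%R <= (2 * #|A|).+1)%N /\
  (num_prod A - den_prod A)`_(2 * #|A|) = \prod_(j in A) (- w j) - \prod_(j in A) (- (q * w j)).
Proof.
have top (u v : F -> F) :
    (size (\prod_(j in A) (('X - (u (w j))%:P) * (1 - (v (w j))%:P * 'X)))%R <= (2 * #|A|).+1)%N /\
    (\prod_(j in A) (('X - (u (w j))%:P) * (1 - (v (w j))%:P * 'X)))`_(2 * #|A|) =
    \prod_(j in A) (- v (w j)).
  rewrite -!big_enum cardE /=.
  have [size_top coef_top] := coef_prod_top (enum A)
    (fun j => (XsubC_mul_linear_top (u (w j)) (v (w j))).1).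
  by split=> //; rewrite coef_top; apply: eq_bigr => j _; rewrite (XsubC_mul_linear_top _ _).2.
have [size_num coef_num] := top (fun a => q * a) id.
have [size_den coef_den] := top id (fun a => q * a).
split; last by rewrite coefB coef_num coef_den.
by apply: leq_trans (size_polyD _ _) _; rewrite size_polyN geq_max size_num size_den.
Qed.

Lemma size_pair_quot A : (size (pair_quot A) <= (2 * #|A|).-1)%N.
Proof.
have [-> | nzQ] := eqVneq (pair_quot A) 0; first by rewrite size_poly0.
have := (num_den_top A).1; rewrite -pair_quotK size_Mmonic ?monicXnsubC //.
rewrite -polyC1 size_XnsubC //; move: (size _) (2 * _)%N => s m; lia.
Qed.

End PairPolynomials.

(* [(k, true)] stands for the index -k of the paper, with w_{-k} = 1 / (q w_k). *)
Definition node (F : fieldType) (I : Type) (q : F) (w : I -> F) (p : I * bool) : F :=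
  if p.2 then (q * w p.1)^-1 else w p.1.

Section NodeSum.

Variables (F : fieldType) (q : F) (I : finType) (w : I -> F).
Hypotheses (q_neq0 : q != 0) (q_neq1 : q != 1) (w_neq0 : forall k, w k != 0).
Hypothesis node_inj : injective (node q w).

Let Q := pair_quot q w setT.
Let C := \prod_j (- (q * w j)).
Let Pi p :=
  \prod_(j | j != p.1) ((node q w p - node q w (j, true)) * (node q w p - node q w (j, false))).

Lemma node_neq0 p : node q w p != 0.
Proof. by rewrite /node; case: p.2; rewrite ?invr_eq0 ?mulf_neq0. Qed.

Lemma node_twin p : node q w (p.1, ~~ p.2) = (q * node q w p)^-1.
Proof.
by case: p => k [] //=; rewrite /node /= invfM invrK mulrA mulVf ?mul1r.
Qed.

Lemma node_twin_neq p : q * node q w p ^+ 2 - 1 != 0.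
Proof.
rewrite subr_eq0 expr2 mulrA; apply/eqP => /mulr1_eq; rewrite -node_twin.
by case: p => k b /node_inj [] /eqP; case: b.
Qed.

Lemma root_pair_den_node p : root (pair_den q (w p.1)) (node q w p).
Proof.
apply/eqP; rewrite horner_pair_den /node; case: p.2; last by rewrite subrr mul0r.
by rewrite mulfV ?subrr ?mulr0 // mulf_neq0.
Qed.

Lemma horner_pair_den_nodes j t :
  (pair_den q (w j)).[t] = - (q * w j) * ((t - node q w (j, true)) * (t - node q w (j, false))).
Proof.
by rewrite horner_pair_den /node /=; field; rewrite q_neq0 w_neq0.
Qed.

Lemma Pi_neq0 p : Pi p != 0.
Proof.
apply/prodf_neq0 => j ne_j; rewrite mulf_neq0 // subr_eq0; apply/eqP => /node_inj eq_p;
  by move: ne_j; rewrite eq_p eqxx.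
Qed.

Lemma prod_pair_factor_node p :
  \prod_(j | j != p.1) pair_factor q (node q w p) (w j) * ((1 - q) * C) =
  q * Q.[node q w p] / Pi p.
Proof.
have C_k : C = - (q * w p.1) * \prod_(j | j != p.1) (- (q * w j)) by rewrite /C (bigD1 p.1).
have C_k_neq0 : \prod_(j | j != p.1) (- (q * w j)) != 0.
  by apply/prodf_neq0 => j _; rewrite oppr_eq0 mulf_neq0.
have num_k : (num_prod q w (setT :\ p.1)).[node q w p] =
    \prod_(j | j != p.1) (pair_num q (w j)).[node q w p].
  by rewrite horner_prod; apply: eq_bigl => j; rewrite !inE andbT.
rewrite (eq_bigr _ (fun j _ => pair_factorE q _ _)) prodf_div.
under [X in _ / X]eq_bigr do rewrite horner_pair_den_nodes.
rewrite big_split /= /Q (horner_pair_quot_root (in_setT p.1) (root_pair_den_node p)).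
rewrite num_k C_k -/(Pi p); move: C_k_neq0 (Pi_neq0 p).
move: (\prod_(j | j != p.1) - (q * w j)) (Pi p) => Ck Pp Ck_neq0 Pp_neq0.
by field; rewrite Ck_neq0 Pp_neq0.
Qed.

Lemma C_neq0 : C != 0.
Proof. by apply/prodf_neq0 => j _; rewrite oppr_eq0 mulf_neq0. Qed.

Lemma CE : C = q ^+ #|I| * \prod_j (- w j).
Proof. by rewrite /C -prodr_const -big_split; apply: eq_bigr => j _; rewrite -mulrN. Qed.

Lemma prod_node_sub0 : \prod_p (0 - node q w p) = q^-1 ^+ #|I|.
Proof.
rewrite -(pair_bigA _ (fun k b => 0 - node q w (k, b))) -prodr_const.
by apply: eq_bigr => k _; rewrite big_bool /node /=; field; rewrite q_neq0 w_neq0.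
Qed.

Lemma prod_node_sub1 : \prod_p (1 - node q w p) * C = \prod_k (pair_den q (w k)).[1].
Proof.
rewrite -(pair_bigA _ (fun k b => 1 - node q w (k, b))) /C -big_split.
apply: eq_bigr => k _; rewrite big_bool horner_pair_den /node /=.
by field; rewrite q_neq0 w_neq0.
Qed.

(* By prod_pair_factor_node, if P takes the prescribed values at the nodes, the
   summand at a node y is P(y) / ((y - x0) prod_{y' <> y} (y - y')) / ((1 - q) C): the sum
   is the Lagrange formula for the top coefficient of P on the nodes and x0. *)
Lemma sum_node_lagrange x0 (h : F -> F) (P : {poly F}) :
  (forall p, node q w p != x0) -> (size P <= (2 * #|I|).+1)%N ->
  (forall p, P.[node q w p] =
     Q.[node q w p] * (node q w p - x0) * (q * node q w p ^+ 2 - 1) * h (node q w p) /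
     node q w p) ->
  \sum_p h (node q w p) * \prod_(j | j != p.1) pair_factor q (node q w p) (w j) =
  (P`_(2 * #|I|) - P.[x0] / \prod_p (x0 - node q w p)) / ((1 - q) * C).
Proof.
move=> node_neq_x0 size_P P_node.
pose tau o := if o is Some p then node q w p else x0.
have tau_inj : injective tau.
  move=> [p|] [p'|] //= => [/node_inj -> //| eq_p | eq_p].
  - by have := node_neq_x0 p; rewrite eq_p eqxx.
  - by have := node_neq_x0 p'; rewrite eq_p eqxx.
have card_nodes : #|{: option (I * bool)}| = (2 * #|I|).+1.
  by rewrite card_option card_prod card_bool mulnC.
have := lagrange_top_coef tau_inj; rewrite card_nodes => /(_ _ size_P) <-.
rewrite big_option /= big_option /= mul1r addrAC subrr add0r mulr_suml.
apply: eq_bigr => p _.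
have nodes_p : \prod_(x | Some x != Some p) (node q w p - node q w x) =
    (node q w p - node q w (p.1, ~~ p.2)) * Pi p.
  case: p => k b; rewrite (eq_bigl (fun x => x != (k, b))) => [|x]; last first.
    by rewrite (inj_eq Some_inj).
  exact: (prod_pair_neq (fun j b' => node q w (k, b) - node q w (j, b'))).
rewrite big_option /= nodes_p node_twin P_node.
have qC_neq0 : (1 - q) * C != 0 by rewrite mulf_neq0 ?C_neq0 // subr_eq0 eq_sym.
apply: (canRL (mulfK qC_neq0)); rewrite -mulrA prod_pair_factor_node.
have x0_neq : node q w p - x0 != 0 by rewrite subr_eq0.
have twin_neq : node q w p * (q * node q w p) - 1 != 0.
  by have := node_twin_neq p; rewrite expr2 mulrA mulrC.
move: (node_neq0 p) (Pi_neq0 p) x0_neq twin_neq.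
move: (node q w p) (Pi p) => y Pp y_neq0 Pp_neq0 x0_neq twin_neq.
by field; rewrite y_neq0 q_neq0 Pp_neq0 twin_neq x0_neq.
Qed.

Lemma prod_setT (G : I -> F) : \prod_(j in [set: I]) G j = \prod_j G j.
Proof. by apply: eq_bigl => j; rewrite in_setT. Qed.

Lemma sum_prod_pair_factor_node :
  \sum_p \prod_(j | j != p.1) pair_factor q (node q w p) (w j) =
  (1 - q ^+ #|I|) * (q + q ^+ #|I|) / ((1 - q) * q ^+ #|I|).
Proof.
pose P := q *: (num_prod q w setT - den_prod q w setT) + (q - 1) *: Q.
have [size_top coef_top] := num_den_top q w [set: I].
rewrite cardsT !prod_setT in size_top coef_top.
have size_Q : (size Q <= (2 * #|I|).-1)%N by rewrite -cardsT size_pair_quot.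
have size_P : (size P <= (2 * #|I|).+1)%N.
  apply: leq_trans (size_polyD _ _) _; rewrite geq_max !(leq_trans (size_scale_leq _ _)) //.
  by apply: leq_trans size_Q _; rewrite (leq_trans (leq_pred _)).
have P_Q t : P.[t] = Q.[t] * (q * t ^+ 2 - 1).
  by rewrite /P hornerD !hornerZ -pair_quotK hornerM hornerD hornerN hornerXn hornerC; ring.
have P_node p : P.[node q w p] =
    Q.[node q w p] * (node q w p - 0) * (q * node q w p ^+ 2 - 1) * 1 / node q w p.
  by rewrite P_Q; move: (node_neq0 p) => ?; field.
have top_P : P`_(2 * #|I|) = q * (\prod_j (- w j) - C).
  rewrite coefD !coefZ coef_top [Q`__]nth_default ?mulr0 ?addr0 //.
  exact: leq_trans size_Q (leq_pred _).
have P0 : P.[0] = C - \prod_j (- w j).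
  by rewrite P_Q /Q horner_pair_quot0 !prod_setT expr0n mulr0 sub0r mulrN1 opprB.
transitivity
  (\sum_p (fun=> 1) (node q w p) * \prod_(j | j != p.1) pair_factor q (node q w p) (w j)).
  by apply: eq_bigr => p _; rewrite mul1r.
rewrite (sum_node_lagrange (h := fun=> 1) node_neq0 size_P P_node) top_P P0 prod_node_sub0 CE.
rewrite exprVn.
have Pi_neq0 : \prod_j (- w j) != 0 by apply/prodf_neq0 => j _; rewrite oppr_eq0.
have qm_neq0 : q ^+ #|I| != 0 by rewrite expf_neq0.
have q1_neq0 : 1 - q != 0 by rewrite subr_eq0 eq_sym.
move: Pi_neq0 qm_neq0; move: (\prod_j (- w j)) (q ^+ #|I|) => Pw qm Pw_neq0 qm_neq0.
by field; rewrite Pw_neq0 qm_neq0 q1_neq0 oner_eq0.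
Qed.

Lemma sum_phi1_prod_pair_factor_node alpha : (forall p, node q w p != 1) ->
  \sum_p phi1 q alpha (node q w p) * \prod_(j | j != p.1) pair_factor q (node q w p) (w j) =
  \sum_k (1 - q) ^+ 2 * w k / ((1 - w k) * (1 - q * w k)).
Proof.
move=> node_neq1; pose d k := (pair_den q (w k)).[1].
have d_neq0 k : d k != 0.
  have := node_neq1 (k, false); have := node_neq1 (k, true).
  rewrite /d horner_pair_den /node /= mulr1 invr_eq1 => ? ?.
  by rewrite mulf_neq0 // subr_eq0 eq_sym.
pose P := (1 - q) *: (Q * (alpha%:P * 'X + (1 - q - alpha)%:P)).
have P_Q t : P.[t] = (1 - q) * (Q.[t] * (alpha * t + (1 - q - alpha))).
  by rewrite /P hornerZ hornerM hornerMXaddC hornerC.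
have size_P : (size P <= 2 * #|I|)%N.
  have [Q0 | Q_neq0] := eqVneq Q 0; first by rewrite /P Q0 mul0r scaler0 size_poly0.
  apply: leq_trans (size_scale_leq _ _) _; apply: leq_trans (size_polyMleq _ _) _.
  have size_lin : (size (alpha%:P * 'X + (1 - q - alpha)%:P)%R <= 2)%N.
    by rewrite size_MXaddC; case: ifP => // _; rewrite ltnS size_polyC_leq1.
  have size_Q : (size Q <= (2 * #|I|).-1)%N by rewrite -cardsT size_pair_quot.
  rewrite -subn1 leq_subLR (leq_trans (leq_add (leqnn _) size_lin)) // addn2 add1n ltnS.
  rewrite -size_poly_gt0 in Q_neq0; move: Q_neq0 size_Q; move: (size Q) => s; lia.
have P_node p : P.[node q w p] =
    Q.[node q w p] * (node q w p - 1) * (q * node q w p ^+ 2 - 1) *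
    phi1 q alpha (node q w p) / node q w p.
  rewrite P_Q /phi1; move: (node_neq0 p) (node_twin_neq p) (node_neq1 p).
  move: (node q w p) => y y_neq0 twin_neq y_neq1.
  by field; rewrite y_neq0 subr_eq0 eq_sym y_neq1 -oppr_eq0 opprB twin_neq.
rewrite (sum_node_lagrange node_neq1 (leqW size_P) P_node) (nth_default 0 size_P).
rewrite P_Q /Q horner_pair_quotT1 //.
have -> : \sum_k (1 - q) ^+ 2 * w k / ((1 - w k) * (1 - q * w k)) =
    (1 - q) ^+ 2 * \sum_k w k / d k.
  by rewrite mulr_sumr; apply: eq_bigr => k _; rewrite /d horner_pair_den mulr1 mulrA.
rewrite (canRL (mulfK C_neq0) prod_node_sub1) -/(\prod_k d k).
have : \prod_k d k != 0 by apply/prodf_neq0.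
move: (\prod_k d k) (\sum_k w k / d k) => D S D_neq0.
by field; rewrite D_neq0 C_neq0 subr_eq0 eq_sym q_neq1.
Qed.

End NodeSum.

Section SignedSymmetrization.

Variables (F : fieldType) (q : F).
Hypothesis q_neq0 : q != 0.

Definition pair_prod n (x : 'I_n -> F) : F :=
  \prod_(i < n) \prod_(j < n | (i < j)%N) pair_factor q (x i) (x j).

Definition bsym n (G : ('I_n -> F) -> F) (w : 'I_n -> F) : F :=
  \sum_(s : 'S_n) \sum_(e : {ffun 'I_n -> bool}) G (sperm_apply q s e w).

Lemma eq_pair_prod n (x x' : 'I_n -> F) : x =1 x' -> pair_prod x = pair_prod x'.
Proof. by move=> eq_x; apply: eq_bigr => i _; apply: eq_bigr => j _; rewrite !eq_x. Qed.

Lemma sperm_applyE n s e (w : 'I_n -> F) i : sperm_apply q s e w i = node q w (s i, e i).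
Proof. by []. Qed.

Lemma sperm_apply_lift0 n (w : 'I_n.+1 -> F) k s b e :
  sperm_apply q (lift_perm ord0 k s) (ffun_cons0 b e) w ord0 = node q w (k, b).
Proof. by rewrite sperm_applyE ffunE unlift_none lift_perm_id. Qed.

Lemma sperm_apply_lift n (w : 'I_n.+1 -> F) k s b e (j : 'I_n) :
  sperm_apply q (lift_perm ord0 k s) (ffun_cons0 b e) w (lift ord0 j) =
  sperm_apply q s e (fun i : 'I_n => w (lift k i)) j.
Proof. by rewrite !sperm_applyE ffunE liftK lift_perm_lift. Qed.

Lemma pair_prodS n (x : 'I_n.+1 -> F) :
  pair_prod x =
  \prod_(j < n) pair_factor q (x ord0) (x (lift ord0 j)) * pair_prod (fun i => x (lift ord0 i)).
Proof.
rewrite /pair_prod big_ord_recl; congr (_ * _).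
  by rewrite big_mkcond big_ord_recl /= mul1r.
apply: eq_bigr => i _; rewrite big_mkcond big_ord_recl /= mul1r [RHS]big_mkcond.
exact: eq_bigr.
Qed.

Lemma pair_factor_inv y a : a != 0 -> y - a != 0 -> y - (q * a)^-1 != 0 ->
  pair_factor q y (q * a)^-1 = pair_factor q y a.
Proof.
move=> a_neq0 ya_neq0 yqa_neq0; rewrite /pair_factor.
have qa_neq0 : q * a != 0 by rewrite mulf_neq0.
have qay_neq1 : 1 - q * y * a != 0.
  apply: contra yqa_neq0 => /eqP qay1.
  have qay : q * a * y = 1 by rewrite -[RHS]subr0 -qay1; ring.
  by rewrite (mulr1_eq qay) subrr.
have e1 : a - y = - (y - a) by rewrite opprB.
have e2 : y * (q * a) - 1 = - (1 - q * y * a) by rewrite opprB mulrCA mulrA.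
by field; rewrite e1 e2 !oppr_eq0 qay_neq1 ya_neq0 a_neq0 q_neq0.
Qed.

Lemma prod_pair_factor_sperm n (w : 'I_n -> F) y s e :
  (forall j, w j != 0) -> (forall p, y != node q w p) ->
  \prod_j pair_factor q y (sperm_apply q s e w j) = \prod_j pair_factor q y (w j).
Proof.
move=> w_neq0 y_neq; rewrite [RHS](reindex_perm s); apply: eq_bigr => j _.
rewrite sperm_applyE /node /=; case: (e j) => //.
by apply: pair_factor_inv; rewrite ?subr_eq0 ?(y_neq (s j, false)) ?(y_neq (s j, true)).
Qed.

Lemma node_lift_inj n (w : 'I_n.+1 -> F) (k : 'I_n.+1) :
  injective (node q w) -> injective (node q (fun i : 'I_n => w (lift k i))).
Proof.
move=> node_inj [i b] [i' b'] /(node_inj (lift k i, b) (lift k i', b')) [eq_i ->].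
by have /lift_inj -> : lift k i = lift k i' by exact: val_inj.
Qed.

Lemma bsymS n (g : F -> F) (w : 'I_n.+1 -> F) :
  (forall k, w k != 0) -> injective (node q w) ->
  bsym (fun x => pair_prod x * g (x ord0)) w =
  \sum_p g (node q w p) * \prod_(j | j != p.1) pair_factor q (node q w p) (w j) *
         bsym (@pair_prod n) (fun i : 'I_n => w (lift p.1 i)).
Proof.
move=> w_neq0 node_inj; rewrite /bsym big_perm_lift0.
under eq_bigr => k _ do under eq_bigr => s _ do rewrite big_ffun_cons0.
rewrite -(pair_bigA _ (fun k b => g (node q w (k, b)) *
  \prod_(j | j != k) pair_factor q (node q w (k, b)) (w j) *
  \sum_(s : 'S_n) \sum_e pair_prod (sperm_apply q s e (fun i : 'I_n => w (lift k i))))).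
apply: eq_bigr => k _; rewrite exchange_big /=; apply: eq_bigr => b _.
rewrite mulr_sumr; apply: eq_bigr => s _; rewrite mulr_sumr; apply: eq_bigr => e _.
rewrite pair_prodS sperm_apply_lift0 (eq_pair_prod (sperm_apply_lift _ _ _ _ _)).
rewrite (eq_bigr _ (fun j _ => congr1 _ (sperm_apply_lift w k s b e j))).
rewrite prod_pair_factor_sperm => [|j|[j b']]; last 2 first.
- exact: w_neq0.
- apply/eqP => /(node_inj (k, b) (lift k j, b')) [] /eqP.
  by rewrite (negbTE (neq_lift k j)).
by rewrite -(prod_lift (fun j => pair_factor q (node q w (k, b)) (w j))) mulrC mulrA.
Qed.

End SignedSymmetrization.

Lemma VkS (F : fieldType) (q : F) n :
  Vk q n.+1 = Vk q n * (q ^+ n * (1 - q)) / ((1 - q ^+ n.+1) * (1 + q ^+ n)).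
Proof.
rewrite /Vk big_nat_recr //= binS bin1 exprD subn1 /= exprS !invfM; ring.
Qed.

Lemma Vk_neq0 (R : realFieldType) (q : R) n : 0 < q -> q != 1 -> Vk q n != 0.
Proof.
move=> q_gt0 q_neq1; have q_neq0 : q != 0 by rewrite gt_eqF.
have q1_neq0 : 1 - q != 0 by rewrite subr_eq0 eq_sym.
apply: mulf_neq0; first by rewrite mulf_neq0 ?expf_neq0.
rewrite invr_eq0 prodf_seq_neq0; apply/allP => i; rewrite mem_index_iota => /andP [i_gt0 _].
rewrite mulf_neq0 // ?subr_eq0 1?eq_sym ?pexpr_eq1 ?ltW -?lt0n //.
by rewrite lt_eqF // addr_gt0 // exprn_gt0.
Qed.

Lemma bsym_pair_prod (F : fieldType) (q : F) n (w : 'I_n -> F) :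
  q != 0 -> q != 1 -> (forall k, w k != 0) -> injective (node q w) ->
  bsym q (@pair_prod F q n) w = (Vk q n)^-1.
Proof.
move=> q_neq0 q_neq1; elim: n w => [|n IH] w w_neq0 node_inj.
  rewrite /bsym /pair_prod /Vk big_geq //.
  under eq_bigr do under eq_bigr do rewrite big_ord0.
  rewrite !sumr_const card_ffun card_Sn !card_ord expn0 fact0 bin_small //.
  by rewrite !expr0 mulr1 divr1 invr1.
transitivity (bsym q (fun x => pair_prod q x * (fun=> 1) (x ord0)) w).
  by apply: eq_bigr => s _; apply: eq_bigr => e _; rewrite mulr1.
rewrite (@bsymS _ q q_neq0 n (fun=> 1)) //.
under eq_bigr => p _ do rewrite mul1r (IH _ (fun k => w_neq0 _) (node_lift_inj node_inj)).
rewrite -mulr_suml sum_prod_pair_factor_node // card_ord VkS.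
move: (Vk q n) => V; rewrite !invfM !invrK !exprS; move: V^-1 => Vinv.
have q1_neq0 : 1 - q != 0 by rewrite subr_eq0 eq_sym.
by field; rewrite q1_neq0 expf_neq0 // q_neq0.
Qed.

Lemma generic_point_nodes (F : fieldType) N (q : F) (w : 'I_N -> F) :
  q != 0 -> generic_point q w ->
  [/\ forall k, w k != 0, injective (node q w) & forall p, node q w p != 1].
Proof.
move=> q_neq0 [w_gen x_gen]; split=> [k | [k b] [k' b'] | [k b]].
- by case: (w_gen k).
- have [<- | ne_kk] := eqVneq k k'.
    have [w_neq0 _] := w_gen k.
    have /(_ k) [_ /eqP sq_neq] := (x_gen 1%g [ffun=> false]).2.
    rewrite /sperm_apply ffunE perm1 in sq_neq.
    have w_neq_twin : w k != (q * w k)^-1.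
      apply/eqP => w_twin; apply: sq_neq.
      by rewrite expr2 mulrA {2}w_twin mulfV ?subrr // mulf_neq0.
    by case: b b' => [] [] //= /eqP; rewrite ?(negbTE w_neq_twin) // eq_sym (negbTE w_neq_twin).
  have := (x_gen 1%g [ffun i => if i == k then b else b']).1 k k' ne_kk.
  rewrite /sperm_apply !ffunE !perm1 eqxx [k' == k]eq_sym (negbTE ne_kk) subr_eq0.
  by case=> /eqP ne_nodes _ /ne_nodes.
- have [_ [w_neq1 qw_neq1]] := w_gen k; rewrite /node; case: b => /=.
    by rewrite invr_eq1; apply: contra qw_neq1 => /eqP ->; rewrite subrr.
  by apply: contra w_neq1 => /eqP ->; rewrite subrr.
Qed.

Unset Implicit Arguments.
Theorem lemma6p5 (R : realFieldType) (q alpha : R) (N : nat) (hN : (0 < N)%N)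
  (w : 'I_N -> R) :
  0 < q -> q != 1 -> 0 <= alpha ->
  generic_point q w ->
  F1 q alpha (Ordinal hN) w =
  alpha ^+ (N - 1) *
  \sum_(k < N) ((1 - q) ^+ 2 * w k / ((1 - w k) * (1 - q * w k))).
Proof.
move=> q_gt0 q_neq1 _; have q_neq0 : q != 0 by rewrite gt_eqF.
move: hN w; case: N => [//|n] hN w /(generic_point_nodes q_neq0) [w_neq0 node_inj node_neq1].
have -> : Ordinal hN = ord0 by apply: val_inj.
rewrite /F1 subn1 /=.
change (\sum_s \sum_e _) with (bsym q (fun x => pair_prod q x * phi1 q alpha (x ord0)) w).
rewrite bsymS //.
under [in LHS]eq_bigr => p _ do
  rewrite (bsym_pair_prod q_neq0 q_neq1 (fun k => w_neq0 _) (node_lift_inj (k := p.1) node_inj)).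
rewrite -mulr_suml sum_phi1_prod_pair_factor_node //.
by move: (Vk_neq0 n q_gt0 q_neq1) => V_neq0; field.
Qed.
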